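(* Consider the one-dimensional conservative forward Euler finite difference scheme $\mathbf{u}_i^{n+1}=\mathbf{u}_i^n-\lambda(\mathbf{f}_{i+1/2}-\mathbf{f}_{i-1/2})$, $\lambda=\Delta t/\Delta x$, with numerical fluxes of the form $\mathbf{f}_{i+1/2}=\alpha_{i+1/2}(\mathbf{w}^+_{i+1/2}-\mathbf{w}^-_{i+1/2})$, where $\mathbf{w}^\pm_{i+1/2}\in\mathbb{R}^6$ are given interface values and $\alpha_{i+1/2}=\max\{\alpha(\mathbf{u}_i^n),\alpha(\mathbf{u}_{i+1}^n)\}$. Let $\mathbf{w}_i^\pm=\mathbf{w}^\pm(\mathbf{u}_i^n)$ and $\mathbf{q}_i^{+,*}=\frac{1}{1-\hat w_N}(\mathbf{w}_i^+-\hat w_N\mathbf{w}^+_{i+1/2})$, $\mathbf{q}_i^{-,*}=\frac{1}{1-\hat w_1}(\mathbf{w}_i^--\hat w_1\mathbf{w}^-_{i-1/2})$. Assume that for all $i$: (1) $\mathbf{u}_i^n\in\mathbb{U}_{\mathrm{ad}}$; (2) $\mathbf{q}_i^{\pm,*}\in\mathbb{U}_{\mathrm{ad}}$ and $\mathbf{w}^\pm_{i+1/2}\in\mathbb{U}_{\mathrm{ad}}$. Then the scheme is positivity preserving, i.e. $\mathbf{u}_i^{n+1}\in\mathbb{U}_{\mathrm{ad}}$ for all $i$, provided the CFL condition $\frac{\alpha\,\Delta t}{\Delta x}\le\hat w_1$ holds, where $\alpha=\max_i\alpha(\mathbf{u}_i^n)$.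
   Context: Ten-Moment equations in 1-D: conservative variable $\mathbf{u}=(\rho,\rho v_1,\rho v_2,E_{11},E_{12},E_{22})^\top$; pressure components $p_{11}=2E_{11}-\rho v_1^2$, $p_{12}=2E_{12}-\rho v_1v_2$, $p_{22}=2E_{22}-\rho v_2^2$; $\mathbb{U}_{\mathrm{ad}}=\{\mathbf{u}:\rho>0,\ \mathbf{p}\text{ positive definite}\}$. Flux $\mathbf{f}(\mathbf{u})=\big(\rho v_1,\ \rho v_1^2+p_{11},\ \rho v_1v_2+p_{12},\ (E_{11}+p_{11})v_1,\ E_{12}v_1+\tfrac12(p_{11}v_2+p_{12}v_1),\ E_{22}v_1+p_{12}v_2\big)^\top$; wave speed $\alpha(\mathbf{u})=|v_1|+\sqrt{3p_{11}/\rho}$; $\mathbf{w}^\pm(\mathbf{u})=\frac12(\mathbf{u}\pm\mathbf{f}(\mathbf{u})/\alpha(\mathbf{u}))$. Uniform mesh with nodes $x_i$, spacing $\Delta x$, interfaces $x_{i+1/2}$. $\hat w_1,\dots,\hat w_N$ are the weights (normalized to sum to $1$ on a cell) of the $N$-point Gauss–Lobatto quadrature rule, $N\ge4$, so that $\hat w_1=\hat w_N$ (for $N=4$, $\hat w_1=1/12$). In the paper $\mathbf{w}^\pm_{i+1/2}=\pm\mathbf{f}^\pm_{i+1/2}/\alpha_{i+1/2}$, where $\mathbf{f}^\pm_{i+1/2}$ are WENO reconstructions of the Lax–Friedrichs split fluxes $\frac12(\mathbf{f}(\mathbf{u})\pm\alpha_{i+1/2}\mathbf{u})$, possibly modified by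 a scaling limiter. *)

From HB Require Import structures.
From mathcomp Require Import all_boot all_order all_algebra.
Set Implicit Arguments. Unset Strict Implicit. Unset Printing Implicit Defensive.
Import Order.TTheory GRing.Theory Num.Theory.
Local Open Scope ring_scope.

Section TenMoment.
Variable R : rcfType.

(* conservative variable u = (rho, rho v1, rho v2, E11, E12, E22) as a row vector *)
Definition comp (k : nat) (u : 'rV[R]_6) : R := u ord0 (inord k).
Definition rho (u : 'rV[R]_6) := comp 0 u.
Definition v1 (u : 'rV[R]_6) := comp 1 u / rho u.
Definition v2 (u : 'rV[R]_6) := comp 2 u / rho u.
Definition E11 (u : 'rV[R]_6) := comp 3 u.
Definition E12 (u : 'rV[R]_6) := comp 4 u.
Definition E22 (u : 'rV[R]_6) := comp 5 u.
Definition p11 (u : 'rV[R]_6) := 2 * E11 u - rho u * v1 u ^+ 2.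
Definition p12 (u : 'rV[R]_6) := 2 * E12 u - rho u * v1 u * v2 u.
Definition p22 (u : 'rV[R]_6) := 2 * E22 u - rho u * v2 u ^+ 2.

Definition pmat (u : 'rV[R]_6) : 'M[R]_2 :=
  \matrix_(i < 2, j < 2)
    (if (i : nat) == 0%N then (if (j : nat) == 0%N then p11 u else p12 u)
     else (if (j : nat) == 0%N then p12 u else p22 u)).

Definition posdef n (P : 'M[R]_n) : Prop :=
  forall x : 'cV[R]_n, x != 0 -> 0 < (x^T *m P *m x) ord0 ord0.

Definition admissible (u : 'rV[R]_6) : Prop := 0 < rho u /\ posdef (pmat u).

Definition flux (u : 'rV[R]_6) : 'rV[R]_6 :=
  \row_(k < 6)
   [:: rho u * v1 u;
       rho u * v1 u ^+ 2 + p11 u;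
       rho u * v1 u * v2 u + p12 u;
       (E11 u + p11 u) * v1 u;
       E12 u * v1 u + 2^-1 * (p11 u * v2 u + p12 u * v1 u);
       E22 u * v1 u + p12 u * v2 u ]`_k.

Definition alpha (u : 'rV[R]_6) : R := `|v1 u| + Num.sqrt (3 * p11 u / rho u).

Definition wplus (u : 'rV[R]_6) : 'rV[R]_6 := 2^-1 *: (u + (alpha u)^-1 *: flux u).
Definition wminus (u : 'rV[R]_6) : 'rV[R]_6 := 2^-1 *: (u - (alpha u)^-1 *: flux u).

End TenMoment.

(* Endpoint weights of the N-point Gauss-Lobatto rule normalized to sum 1 on a
   cell: hat w_1 = hat w_N = 1/(N(N-1))  (e.g. 1/12 for N = 4). *)
Definition gl_w1 (R : rcfType) (N : nat) : R := ((N * (N - 1))%N%:R)^-1.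
Definition gl_wN (R : rcfType) (N : nat) : R := ((N * (N - 1))%N%:R)^-1.

(* One step of the scheme on the infinite uniform mesh, nodes indexed by int.
   wp i, wm i stand for w^+_{i+1/2}, w^-_{i+1/2}. *)
Definition alpha_half (R : rcfType) (u : int -> 'rV[R]_6) (i : int) : R :=
  Num.max (alpha (u i)) (alpha (u (i + 1))).
Definition num_flux (R : rcfType) (u wp wm : int -> 'rV[R]_6) (i : int) : 'rV[R]_6 :=
  alpha_half u i *: (wp i - wm i).
Definition euler_step (R : rcfType) (lam : R) (u wp wm : int -> 'rV[R]_6) (i : int)
  : 'rV[R]_6 :=
  u i - lam *: (num_flux u wp wm i - num_flux u wp wm (i - 1)).

Definition qplus (R : rcfType) (N : nat) (u wp : int -> 'rV[R]_6) (i : int) : 'rV[R]_6 :=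
  (1 - gl_wN R N)^-1 *: (wplus (u i) - gl_wN R N *: wp i).
Definition qminus (R : rcfType) (N : nat) (u wm : int -> 'rV[R]_6) (i : int) : 'rV[R]_6 :=
  (1 - gl_w1 R N)^-1 *: (wminus (u i) - gl_w1 R N *: wm (i - 1)).

(* Admissibility is invariant under positive scaling and, since
   {(r, L, m) | 0 < r, m^2 < r L} is a convex cone, under addition; so U_ad is
   a convex cone.  The half-sums w^+(u) + w^-(u) = u and the definitions of
   q^{+,*}, q^{-,*} rewrite the Euler update of u_i as a combination of
   q_i^{+,*}, q_i^{-,*}, w^{+-}_{i+1/2} and w^{+-}_{i-1/2} whose coefficients
   1 - w_1, w_1 - lam alpha_{i+-1/2} and lam alpha_{i+-1/2} are nonnegative
   under the CFL condition. *)
From Pilot Require Import Defs.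
From HB Require Import structures.
From mathcomp Require Import all_boot all_order all_algebra.
From mathcomp Require Import ring zify.
Set Implicit Arguments. Unset Strict Implicit. Unset Printing Implicit Defensive.
Import Order.TTheory GRing.Theory Num.Theory.
Local Open Scope ring_scope.

Lemma posdef2_add (F : realDomainType) (r r' L L' m m' : F) :
  0 < r -> 0 < r' -> 0 < r * L - m ^+ 2 -> 0 < r' * L' - m' ^+ 2 ->
  0 < (r + r') * (L + L') - (m + m') ^+ 2.
Proof.
move=> r_gt0 r'_gt0 d_gt0 d'_gt0.
have cross_gt0 : 0 < r * L' + r' * L - 2 * m * m'.
  rewrite -(pmulr_rgt0 _ (mulr_gt0 r_gt0 r'_gt0)).
  have -> : r * r' * (r * L' + r' * L - 2 * m * m') =
      r ^+ 2 * (r' * L' - m' ^+ 2) + r' ^+ 2 * (r * L - m ^+ 2)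
      + (r * m' - r' * m) ^+ 2 by ring.
  by rewrite ltr_wpDr ?sqr_ge0 // addr_gt0 // mulr_gt0 // exprn_gt0.
have -> : (r + r') * (L + L') - (m + m') ^+ 2 =
    (r * L - m ^+ 2) + (r' * L' - m' ^+ 2) + (r * L' + r' * L - 2 * m * m') by ring.
by apply: addr_gt0 => //; apply: addr_gt0.
Qed.

Section Admissible.
Variable R : rcfType.
Implicit Types (u x y : 'rV[R]_6) (a b c : R).

Lemma pmat_form u (x : 'cV[R]_2) :
  (x^T *m pmat u *m x) ord0 ord0 =
  p11 u * x ord0 ord0 ^+ 2 + 2 * p12 u * x ord0 ord0 * x (lift ord0 ord0) ord0
  + p22 u * x (lift ord0 ord0) ord0 ^+ 2.
Proof.
rewrite !mxE !big_ord_recl !big_ord0 /= !mxE !big_ord_recl !big_ord0 /= !mxE /=.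
ring.
Qed.

(* rho (a, b) p (a, b)^T in the conservative variables: no division by rho. *)
Definition rho_pform u a b :=
  rho u * (2 * (E11 u * a ^+ 2 + 2 * E12 u * a * b + E22 u * b ^+ 2))
  - (Defs.comp 1 u * a + Defs.comp 2 u * b) ^+ 2.

Lemma rho_pformE u a b : 0 < rho u ->
  rho u * (p11 u * a ^+ 2 + 2 * p12 u * a * b + p22 u * b ^+ 2) = rho_pform u a b.
Proof.
rewrite /rho_pform /p11 /p12 /p22 /v1 /v2 => rho_gt0.
by field; rewrite gt_eqF.
Qed.

Lemma admissibleE u : admissible u <->
  0 < rho u /\ forall a b, a != 0 \/ b != 0 -> 0 < rho_pform u a b.
Proof.
split=> -[rho_gt0 form_gt0]; split=> //.
- move=> a b ab_neq0; pose x : 'cV[R]_2 := \col_(i < 2) if val i == 0%N then a else b.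
  have x_neq0 : x != 0.
    apply/eqP => /matrixP x0; case: ab_neq0 => /eqP; apply.
    - by have := x0 ord0 ord0; rewrite !mxE.
    - by have := x0 (lift ord0 ord0) ord0; rewrite !mxE.
  have := form_gt0 x x_neq0; rewrite pmat_form !mxE /= -(rho_pformE _ _ rho_gt0).
  exact: mulr_gt0.
- move=> x x_neq0; rewrite pmat_form -(pmulr_rgt0 _ rho_gt0) rho_pformE //.
  apply: form_gt0; apply/orP; apply: contraNT x_neq0; rewrite negb_or !negbK.
  move=> /andP[/eqP x0 /eqP x1]; apply/eqP/matrixP => i j.
  rewrite mxE (ord1 j); case: i => -[|[|//]] ? /=.
  + by rewrite -x0; congr (x _ _); apply: val_inj.
  + by rewrite -x1; congr (x _ _); apply: val_inj.
Qed.

Lemma compD k x y : Defs.comp k (x + y) = Defs.comp k x + Defs.comp k y.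
Proof. by rewrite /Defs.comp mxE. Qed.

Lemma compZ k c x : Defs.comp k (c *: x) = c * Defs.comp k x.
Proof. by rewrite /Defs.comp mxE. Qed.

Lemma admissibleD x y : admissible x -> admissible y -> admissible (x + y).
Proof.
rewrite !admissibleE => -[x0_gt0 x_gt0] [y0_gt0 y_gt0].
split=> [|a b ab_neq0]; first by rewrite /rho compD addr_gt0.
have := posdef2_add x0_gt0 y0_gt0 (x_gt0 a b ab_neq0) (y_gt0 a b ab_neq0).
by rewrite /rho_pform /rho /E11 /E12 /E22 !compD; congr (0 < _); ring.
Qed.

Lemma admissibleZ c x : 0 < c -> admissible x -> admissible (c *: x).
Proof.
move=> c_gt0; rewrite !admissibleE => -[x0_gt0 x_gt0].
split=> [|a b ab_neq0]; first by rewrite /rho compZ mulr_gt0.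
have -> : rho_pform (c *: x) a b = c ^+ 2 * rho_pform x a b.
  by rewrite /rho_pform /rho /E11 /E12 /E22 !compZ; ring.
by rewrite mulr_gt0 ?exprn_gt0 ?x_gt0.
Qed.

Lemma admissibleDZ x c y :
  admissible x -> 0 <= c -> admissible y -> admissible (x + c *: y).
Proof.
move=> x_adm; rewrite le_eqVlt => /predU1P[<- _|c_gt0 y_adm].
  by rewrite scale0r addr0.
by apply: admissibleD; last exact: admissibleZ.
Qed.

Lemma alpha_ge0 u : 0 <= alpha u.
Proof. by rewrite addr_ge0 ?sqrtr_ge0. Qed.

Lemma wplusDwminus u : wplus u + wminus u = u.
Proof.
rewrite /wplus /wminus -scalerDr addrACA subrr addr0 -mulr2n -scaler_nat scalerA.
by rewrite mulVf ?scale1r ?pnatr_eq0.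
Qed.

End Admissible.

Lemma gl_w1_lt1 (R : rcfType) N : (2 <= N)%N -> gl_w1 R N < 1.
Proof. by move=> N_ge2; rewrite /gl_w1 invf_lt1 ?ltr0n ?ltr1n; lia. Qed.

Lemma euler_step_split (R : rcfType) N lam (u wp wm : int -> 'rV[R]_6) i :
  let w := gl_w1 R N in
  let a := alpha_half u in
  w != 1 ->
  euler_step lam u wp wm i =
    (1 - w) *: qplus N u wp i + (1 - w) *: qminus N u wm i
    + (w - lam * a i) *: wp i + (lam * a i) *: wm i
    + (lam * a (i - 1)) *: wp (i - 1) + (w - lam * a (i - 1)) *: wm (i - 1).
Proof.
move=> w a w_neq1.
rewrite /qplus /qminus !scalerA mulfV ?subr_eq0 1?eq_sym // !scale1r.
rewrite /euler_step /num_flux -/a -[u i in LHS]wplusDwminus.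
move: (wplus _) (wminus _) (wp i) (wm i) (wp (i - 1)) (wm (i - 1)) => P M p1 m1 p0 m0.
rewrite -[gl_wN R N]/w -/w; clearbody w a; apply/rowP => k; rewrite !mxE; ring.
Qed.

Theorem theorem3 (R : rcfType) (N : nat) (dt dx : R)
    (u wp wm : int -> 'rV[R]_6) (amax : R) :
  (4 <= N)%N -> 0 < dt -> 0 < dx ->
  (forall i, admissible (u i)) ->
  (forall i, admissible (qplus N u wp i) /\ admissible (qminus N u wm i)) ->
  (forall i, admissible (wp i) /\ admissible (wm i)) ->
  (* amax = max_i alpha(u_i) *)
  (forall i, alpha (u i) <= amax) -> (exists i, alpha (u i) = amax) ->
  amax * dt / dx <= gl_w1 R N ->
  forall i, admissible (euler_step (dt / dx) u wp wm i).
Proof.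
(* u_i itself enters only through w^+(u_i) + w^-(u_i) = u_i, so the
   admissibility of q^{+-,*}_i is what is used, not that of u_i. *)
move=> N_ge4 dt_gt0 dx_gt0 _ q_adm w_adm alpha_le _ cfl i.
have lam_gt0 : 0 < dt / dx by rewrite divr_gt0.
have w_lt1 : gl_w1 R N < 1 by rewrite gl_w1_lt1 //; lia.
have a_ge0 j : 0 <= dt / dx * alpha_half u j.
  by rewrite mulr_ge0 ?(ltW lam_gt0) // le_max alpha_ge0.
have a_le_w j : 0 <= gl_w1 R N - dt / dx * alpha_half u j.
  rewrite subr_ge0 (le_trans _ cfl) //.
  have -> : amax * dt / dx = dt / dx * amax by ring.
  rewrite ler_wpM2l ?(ltW lam_gt0) //.
  by rewrite /alpha_half ge_max !alpha_le.
have [qp_adm qm_adm] := q_adm i.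
have [[wp1_adm wm1_adm] [wp0_adm wm0_adm]] := (w_adm i, w_adm (i - 1)).
rewrite (euler_step_split (N := N)) ?lt_eqF //.
have one_sub_w_gt0 : 0 < 1 - gl_w1 R N by rewrite subr_gt0.
apply: admissibleDZ (a_le_w _) wm0_adm; apply: admissibleDZ (a_ge0 _) wp0_adm.
apply: admissibleDZ (a_ge0 _) wm1_adm; apply: admissibleDZ (a_le_w _) wp1_adm.
apply: admissibleDZ (ltW one_sub_w_gt0) qm_adm.
exact: admissibleZ.
Qed.
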